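(* Let $\mathcal{M}=((X,\mathcal{C}_X),\mathcal{V})$ be a closure model with associated closure coalgebra $(X,\eta)$, let $(Y,\theta)$ be a $\mathbf{C}$-coalgebra and $f:(X,\eta)\to(Y,\theta)$ a surjective coalgebra homomorphism. Define $\mathcal{C}_Y(B)=\{y\in Y\mid B\in(\theta y)_2\}$ for $B\subseteq Y$. Then $(Y,\mathcal{C}_Y)$ is a closure space.
   Context: A closure space is $(X,\mathcal{C})$ with $X$ non-empty and $\mathcal{C}:\mathcal{P}(X)\to\mathcal{P}(X)$ satisfying $\mathcal{C}(\emptyset)=\emptyset$, $A\subseteq\mathcal{C}(A)$, $\mathcal{C}(A_1\cup A_2)=\mathcal{C}(A_1)\cup\mathcal{C}(A_2)$. Closure model: closure space plus $\mathcal{V}:AP\to\mathcal{P}(X)$, $\mathcal{V}^{-1}(x)=\{p\mid x\in\mathcal{V}(p)\}$. Closure functor $\mathbf{C}X=\mathcal{P}(AP)\times\mathcal{P}(\mathcal{P}(X))$, $\mathbf{C}f(v,S)=(v,\{f[A]\mid A\in S\})$ (covariant powerset). The closure coalgebra of the model is $\eta(x)=(\mathcal{V}^{-1}(x),\{A\subseteq X\mid x\in\mathcal{C}_X(A)\})$. A homomorphism $f:(X,\eta)\to(Y,\theta)$ satisfies $\theta\circ f=(\mathbf{C}f)\circ\eta$. *)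

From mathcomp Require Import all_boot.
From mathcomp Require Import boolp classical_sets.
Set Implicit Arguments.
Unset Strict Implicit.
Unset Printing Implicit Defensive.
Local Open Scope classical_set_scope.

Definition closure_space (X : Type) (C : set X -> set X) : Prop :=
  [/\ (exists x : X, True),
      C set0 = set0,
      (forall A : set X, A `<=` C A) &
      (forall A1 A2 : set X, C (A1 `|` A2) = C A1 `|` C A2)].

Definition CF (AP X : Type) : Type := (set AP * set (set X))%type.

Definition CFmap (AP X Y : Type) (f : X -> Y) (p : CF AP X) : CF AP Y :=
  (p.1, [set f @` A | A in p.2]).

Definition Vinv (AP X : Type) (V : AP -> set X) (x : X) : set AP :=
  [set p | V p x].

Definition closure_coalg (AP X : Type) (C : set X -> set X) (V : AP -> set X)
  (x : X) : CF AP X :=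
  (Vinv V x, [set A : set X | C A x]).

Definition coalg_hom (AP X Y : Type) (eta : X -> CF AP X) (theta : Y -> CF AP Y)
  (f : X -> Y) : Prop :=
  forall x : X, theta (f x) = CFmap f (eta x).

From mathcomp Require Import all_boot.
From mathcomp Require Import boolp classical_sets.
Set Implicit Arguments.
Unset Strict Implicit.
Local Open Scope classical_set_scope.

(* If f : (X, eta) -> (Y, theta) is a homomorphism out of the closure
   coalgebra of ((X, C), V), then for every x the closure-neighbourhoods of
   f x are exactly the direct images f[A] of the sets A with x in C(A)
   ([hom_closure_image]).  Since f is surjective every point of Y is some
   f x, so each axiom of C_Y(B) = { y | B in (theta y).2 } reduces to a
   statement about C and direct images:
   - C_Y(empty) = empty, since f[A] = empty forces A = empty;
   - B is contained in C_Y(B), witnessed by A = f^-1[B], using f[f^-1[B]] = B;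
   - C_Y is additive: a witness A for B1 u B2 splits as the union of its
     parts lying over B1 and over B2 ([image_setI_preimage]), and
     conversely a witness A for B1 enlarges to A u f^-1[B2], using
     monotonicity of the additive operator C ([additive_monotone]). *)

Lemma additive_monotone (T : Type) (C : set T -> set T) :
  (forall A1 A2 : set T, C (A1 `|` A2) = C A1 `|` C A2) ->
  forall A1 A2 : set T, A1 `<=` A2 -> C A1 `<=` C A2.
Proof.
move=> CU A1 A2 /setUidr A12 z Cz.
by rewrite -A12 CU; left.
Qed.

Lemma image_setI_preimage (T U : Type) (f : T -> U) (A : set T) (B : set U) :
  B `<=` f @` A -> f @` (A `&` f @^-1` B) = B.
Proof.
move=> BfA; apply/seteqP; split=> [_ [a [_ Ba] <-] //|z Bz].
by have [a Aa faz] := BfA z Bz; exists a => //; split=> //; rewrite /preimage /= faz.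
Qed.

Lemma split_over_setU (T U : Type) (f : T -> U) (A : set T) (B1 B2 : set U) :
  f @` A = B1 `|` B2 -> A = (A `&` f @^-1` B1) `|` (A `&` f @^-1` B2).
Proof.
move=> fA; rewrite -setIUr -preimage_setU -fA; apply/esym/setIidl => a Aa.
by exists a.
Qed.

Section InducedClosure.

Variables (AP X Y : Type) (C : set X -> set X) (V : AP -> set X).
Variables (theta : Y -> CF AP Y) (f : X -> Y).
Hypothesis hom : coalg_hom (closure_coalg C V) theta f.

Definition induced_closure (B : set Y) : set Y := [set y | (theta y).2 B].

Lemma hom_closure_image (x : X) (B : set Y) :
  induced_closure B (f x) <-> exists2 A, C A x & f @` A = B.
Proof. by rewrite /induced_closure /= hom. Qed.

Hypothesis surj : forall y : Y, exists x : X, f x = y.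

Let range_f : range f = setT.
Proof. by apply/seteqP; split=> // y _; have [x fxy] := surj y; exists x. Qed.

Lemma induced_closure_set0 : C set0 = set0 -> induced_closure set0 = set0.
Proof.
move=> C0; apply/seteqP; split=> [y|//]; have [x <-] := surj y.
move=> /hom_closure_image [A CAx /image_set0_set0 A0].
by move: CAx; rewrite A0 C0.
Qed.

Lemma induced_closure_extensive :
  (forall A : set X, A `<=` C A) -> forall B : set Y, B `<=` induced_closure B.
Proof.
move=> Cext B y By; have [x fxy] := surj y; subst y.
by apply/hom_closure_image; exists (f @^-1` B); [exact: Cext | exact: image_preimage].
Qed.

Section Additive.

Hypothesis CU : forall A1 A2 : set X, C (A1 `|` A2) = C A1 `|` C A2.

Lemma induced_closure_setU_sub (B1 B2 : set Y) :
  induced_closure (B1 `|` B2) `<=` induced_closure B1 `|` induced_closure B2.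
Proof.
move=> y; have [x <-] := surj y.
move=> /hom_closure_image [A CAx fA].
have over (B : set Y) : B `<=` B1 `|` B2 -> f @` (A `&` f @^-1` B) = B.
  by rewrite -fA; exact: image_setI_preimage.
move: CAx; rewrite (split_over_setU fA) CU => -[CA1|CA2].
- by left; apply/hom_closure_image; exists (A `&` f @^-1` B1); last exact/over/subsetUl.
- by right; apply/hom_closure_image; exists (A `&` f @^-1` B2); last exact/over/subsetUr.
Qed.

Lemma induced_closure_setU_sup (B1 B2 : set Y) :
  induced_closure B1 `|` induced_closure B2 `<=` induced_closure (B1 `|` B2).
Proof.
move=> y; have [x <-] := surj y.
have mono := additive_monotone CU.
case=> /hom_closure_image [A CAx fA]; apply/hom_closure_image.
- exists (A `|` f @^-1` B2); first exact: mono CAx.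
  by rewrite image_setU image_preimage // fA.
- exists (f @^-1` B1 `|` A); first exact: mono CAx.
  by rewrite image_setU image_preimage // fA.
Qed.

Lemma induced_closure_setU (B1 B2 : set Y) :
  induced_closure (B1 `|` B2) = induced_closure B1 `|` induced_closure B2.
Proof.
apply/seteqP; split; [exact: induced_closure_setU_sub | exact: induced_closure_setU_sup].
Qed.

End Additive.

End InducedClosure.

Theorem lemma9 (AP X Y : Type) (C : set X -> set X) (V : AP -> set X)
  (theta : Y -> CF AP Y) (f : X -> Y) :
  closure_space C ->
  coalg_hom (closure_coalg C V) theta f ->
  (forall y : Y, exists x : X, f x = y) ->
  closure_space (fun B : set Y => [set y : Y | (theta y).2 B]).
Proof.
move=> [[x0 _] C0 Cext CU] hom surj; split.
- by exists (f x0).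
- exact: induced_closure_set0 hom surj C0.
- exact: induced_closure_extensive hom surj Cext.
- exact: induced_closure_setU hom surj CU.
Qed.
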